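(* Let $(\lambda,\mu,\mu')$ be an admissible triplet of type 1, and let $\mu^\diamond,\mu'^\diamond$ be the associated weights. Then $\lambda+\mu'^\diamond\in P_+$; equivalently, the triplet $(\lambda,\mu'^\diamond,\mu^\diamond)$ is admissible.
   Context: Type $D_n$ weights are $(\lambda_1,\dots,\lambda_n)$; $\langle\lambda,\alpha_j^\vee\rangle=\lambda_j-\lambda_{j+1}$ ($j<n$), $\langle\lambda,\alpha_n^\vee\rangle=\lambda_{n-1}+\lambda_n$; $P_+=\{\lambda_j\in\frac12\mathbb Z,\lambda_j-\lambda_k\in\mathbb Z,\lambda_1\ge\dots\ge\lambda_n,\lambda_{n-1}+\lambda_n\ge0\}$; $P[S]=\{(\pm\frac12,\dots,\pm\frac12)\}$. $\Delta^k$ is the set of sums $\mu_1+\dots+\mu_k$ over $(\mu_1,\dots,\mu_k)\in P[S]^k$ with all partial sums in $P_+$ ($\Delta^0=\{0\}$). A triplet $(\lambda,\mu,\mu')$ is admissible if $\lambda\in\Delta^k$ for some $k\ge0$, $\mu,\mu'\in P[S]$, $\lambda+\mu,\lambda+\mu+\mu'\in P_+$. A free interval is a subset $\mathrm{Fr}\subset\{1,\dots,n\}$, maximal by inclusion, with $\lambda$ constant on $\mathrm{Fr}$ and $\mu_j\mu'_j<0$ for $j\in\mathrm{Fr}$. Weights $\mu^*,\mu'^*$: equal to $\mu,\mu'$ outside free intervals; on each free interval, with $b=|\{j\in\mathrm{Fr}:\mu'_j=+\frac12\}|$, $\mu'^*_j=+\frac12$ on the $b$ smallest elements of $\mathrm{Fr}$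 and $-\frac12$ on the rest, $\mu^*_j=-\mu'^*_j$. The triplet is of type 1 if $\lambda_{n-1}+\lambda_n+\mu'^*_{n-1}+\mu'^*_n<0$ and $n-1$, $n$ lie in two different free intervals. In that case let $a$ be the number of elements $j$ of the free interval containing $n-1$ with $\mu'_j=-\frac12$; then $\mu'^\diamond$ is obtained from $\mu'^*$ by setting the coordinates $n$ and $n-a$ equal to $+\frac12$, and $\mu^\diamond$ from $\mu^*$ by setting the coordinates $n$ and $n-a$ equal to $-\frac12$ (in $\mu'^*$ these coordinates are $-\frac12$ and in $\mu^*$ they are $+\frac12$, so $\mu^\diamond+\mu'^\diamond=\mu+\mu'$). *)

From mathcomp Require Import all_boot all_order all_algebra.
Set Implicit Arguments. Unset Strict Implicit. Unset Printing Implicit Defensive.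
Import Order.TTheory GRing.Theory Num.Theory.
Local Open Scope ring_scope.

(* Type D_n weights: lambda = (lambda_1,...,lambda_n) in Q^n.
   CONVENTION: the coordinate lambda_j (1-based, as in the paper) is
   stored at the ordinal index j-1 : 'I_n (0-based). *)
Definition weight (n : nat) := {ffun 'I_n -> rat}.

Definition half : rat := 2%:R^-1.

(* value of a weight at a 0-based nat index (0 outside the range) *)
Definition cw n (l : weight n) (i : nat) : rat :=
  if insub i is Some j then l j else 0.

Definition dominant n (l : weight n) : Prop :=
  [/\ forall i, (2%:R * l i) \is a Num.int,
      forall i j, (l i - l j) \is a Num.int,
      forall i j : 'I_n, (i <= j)%N -> l j <= l i
    & 0 <= cw l (n - 2) + cw l (n - 1)].

Definition inPS n (m : weight n) : Prop := forall i, m i = half \/ m i = - half.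

Definition inDelta n (k : nat) (l : weight n) : Prop :=
  exists ms : seq (weight n),
    [/\ size ms = k, forall m, m \in ms -> inPS m,
        forall i, (i <= k)%N -> dominant (\sum_(m <- take i ms) m)
      & l = \sum_(m <- ms) m].

Definition admissible n (l m m' : weight n) : Prop :=
  [/\ exists k, inDelta k l, inPS m, inPS m', dominant (l + m)
    & dominant (l + m + m')].

Definition freeCond n (l m m' : weight n) (F : {set 'I_n}) : bool :=
  [forall i in F, forall j in F, l i == l j] && [forall i in F, m i * m' i < 0].

Definition isFree n (l m m' : weight n) (F : {set 'I_n}) : bool :=
  freeCond l m m' F &&
  [forall G : {set 'I_n}, (freeCond l m m' G && (F \subset G)) ==> (G == F)].

Definition mustar' n (l m m' : weight n) : weight n :=
  [ffun j => match [pick F | isFree l m m' F && (j \in F)] with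
             | Some F =>
                 if (#|[set i in F | (i < j)%N]| <
                     #|[set i in F | m' i == half]|)%N then half else - half
             | None => m' j
             end].

Definition mustar n (l m m' : weight n) : weight n :=
  [ffun j => if [pick F | isFree l m m' F && (j \in F)] is Some _
             then - mustar' l m m' j else m j].

Definition type1 n (l m m' : weight n) : Prop :=
  cw l (n - 2) + cw l (n - 1) + cw (mustar' l m m') (n - 2)
    + cw (mustar' l m m') (n - 1) < 0 /\
  exists (F G : {set 'I_n}) (i1 i2 : 'I_n),
    [/\ val i1 = (n - 2)%N, val i2 = (n - 1)%N, isFree l m m' F & isFree l m m' G] /\
    [/\ i1 \in F, i2 \in G & F != G].

Definition a_num n (l m m' : weight n) : nat :=
  match [pick F | isFree l m m' F && [exists i in F, val i == (n - 2)%N]] with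
  | Some F => #|[set j in F | m' j == - half]|
  | None => 0
  end.

(* mu'^diamond : coordinates n and n-a (1-based) set to +1/2,
   i.e. 0-based indices n-1 and n-a-1 *)
Definition mudiam' n (l m m' : weight n) : weight n :=
  [ffun j => if (val j == (n - 1)%N) || (val j == (n - a_num l m m' - 1)%N)
             then half else mustar' l m m' j].

Definition mudiam n (l m m' : weight n) : weight n :=
  [ffun j => if (val j == (n - 1)%N) || (val j == (n - a_num l m m' - 1)%N)
             then - half else mustar l m m' j].

From Pilot Require Import Defs.
From mathcomp Require Import all_boot all_order all_algebra.
From mathcomp Require Import lra zify.
Import Order.TTheory GRing.Theory Num.Theory.
Set Implicit Arguments. Unset Strict Implicit. Unset Printing Implicit Defensive.
Local Open Scope ring_scope.

(* Free intervals are level sets of lambda cut down to free coordinates, and on a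
   level set the pairs (mu_k, mu'_k) decrease lexicographically (dominance of
   lambda + mu and lambda + mu + mu'), so free coordinates form a contiguous run.
   For a triplet of type 1 the free interval S of n-1 is thus the block of the
   |S| coordinates just before n, on which mu'^* is +1/2 on the first |S| - a
   coordinates and -1/2 on the last a.  Setting coordinate n-a to +1/2 only
   lengthens the run of +1/2, so mu'^diamond stays nonincreasing on every level
   set of lambda; mu'^diamond_n = +1/2 and lambda_{n-1} + lambda_n >= 0 give the
   last dominance condition.  Finally mu^diamond + mu'^diamond = mu + mu', since
   both sides change only at free coordinates, where mu_j + mu'_j = 0. *)

Local Notation half := Defs.half.
Local Notation pm_half x := (x = half \/ x = - half).

Lemma count_iota_range t u k :
  count (fun i => (t <= i < u)%N) (iota 0 k) = (minn u k - t)%N.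
Proof.
elim: k => [|k IHk]; first by rewrite /=; lia.
rewrite -addn1 iotaD count_cat /= addn0 add0n IHk.
by case: (leqP t k); case: (ltnP k u); lia.
Qed.

Lemma card_ord_range n t u : (u <= n)%N ->
  #|[pred k : 'I_n | (t <= k < u)%N]| = (u - t)%N.
Proof.
move=> le_un; rewrite cardE /enum_mem size_filter -enumT /=.
by rewrite -(count_map val (fun i => (t <= i < u)%N)) val_enum_ord count_iota_range; lia.
Qed.

Lemma half_gt0 : 0 < half. Proof. by rewrite invr_gt0 ltr0n. Qed.

Lemma half_neq_opp : half != - half.
Proof. by rewrite -addr_eq0 gt_eqF // addr_gt0 ?half_gt0. Qed.

Lemma pm_half_mul_lt0 (x y : rat) :
  pm_half x -> pm_half y -> (x * y < 0) = (x == - y).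
Proof.
have h := half_gt0; have hh : 0 < half * half by rewrite mulr_gt0.
by case=> -> [] ->; rewrite ?mulrN ?mulNr ?opprK ?oppr_lt0 ?hh ?(lt_gtF hh);
  apply/esym/eqP; lra.
Qed.

Lemma pm_half_free (x y : rat) : pm_half x -> pm_half y -> x * y < 0 -> x = - y.
Proof. by move=> hx hy; rewrite pm_half_mul_lt0 // => /eqP. Qed.

Lemma pm_half_nonfree (x y : rat) :
  pm_half x -> pm_half y -> ~~ (x * y < 0) -> x = y.
Proof.
have h := half_gt0.
by move=> hx hy; rewrite pm_half_mul_lt0 //; case: hx hy => -> [] ->;
  rewrite ?opprK ?eqxx // => /eqP; lra.
Qed.

Lemma pm_half_sub_int (x y : rat) : pm_half x -> pm_half y -> x - y \is a Num.int.
Proof.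
have h1 : half + half = 1 by rewrite /half; lra.
by case=> -> [] ->; rewrite ?subrr ?opprK -?opprD ?h1 ?rpredN.
Qed.

Lemma weightD n (x y : weight n) i : (x + y) i = x i + y i.
Proof. by rewrite ffunE. Qed.

Lemma cw_ord n (x : weight n) (i : 'I_n) : cw x i = x i.
Proof. by rewrite /cw valK. Qed.

Lemma cwD n (x y : weight n) k : cw (x + y) k = cw x k + cw y k.
Proof. by rewrite /cw; case: insub => [i|]; rewrite ?weightD ?addr0. Qed.

Lemma inDelta_dominant n k (l : weight n) : inDelta k l -> dominant l.
Proof.
case=> ms [size_ms _ dom_take ->].
by move: (dom_take k (leqnn k)); rewrite -size_ms take_size.
Qed.

Lemma dominant_add_PS n (l x : weight n) : dominant l -> inPS x ->
  (forall i j : 'I_n, (i <= j)%N -> l i = l j -> x j <= x i) ->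
  0 <= cw (l + x) (n - 2) + cw (l + x) (n - 1) -> dominant (l + x).
Proof.
case=> l_half l_int l_mono _ PSx x_mono last_ok; split => //.
- move=> i; rewrite weightD mulrDr rpredD //.
  by case: (PSx i) => ->; rewrite ?mulrN mulfV // ?rpredN.
- by move=> i j; rewrite !weightD opprD addrACA rpredD ?l_int ?pm_half_sub_int.
- move=> i j le_ij; rewrite !weightD.
  have [eq_l | ne_l] := eqVneq (l i) (l j); first by rewrite eq_l lerD2l x_mono.
  have l_gap : 1 <= l i - l j.
    by rewrite -[l i - l j]ger0_norm ?subr_ge0 ?l_mono // norm_intr_ge1 ?subr_eq0.
  by case: (PSx i) => ->; case: (PSx j) => ->; rewrite /half; lra.
Qed.

Definition free_block n (l m m' : weight n) (j : 'I_n) : {set 'I_n} :=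
  [set k | (l k == l j) && (m k * m' k < 0)].

Section FreeBlocks.
Variables (n : nat) (l m m' : weight n).

Lemma freeCond_free_block j : freeCond l m m' (free_block l m m' j).
Proof.
apply/andP; split; apply/forall_inP => i; rewrite inE => /andP[/eqP li free_i] //.
by apply/forall_inP => k; rewrite inE li => /andP[/eqP -> _].
Qed.

Lemma free_block_max j F : freeCond l m m' F -> j \in F -> F \subset free_block l m m' j.
Proof.
case/andP=> /forall_inP F_level /forall_inP F_free jF.
apply/subsetP => k kF; rewrite inE F_free // andbT.
exact: (forall_inP (F_level k kF) j jF).
Qed.

Lemma isFree_free_block j : m j * m' j < 0 -> isFree l m m' (free_block l m m' j).
Proof.
move=> free_j; rewrite /isFree freeCond_free_block /=.
apply/forallP => G; apply/implyP => /andP[G_cond sub_G].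
have jG : j \in G by apply: (subsetP sub_G); rewrite inE eqxx.
by rewrite eqEsubset sub_G free_block_max.
Qed.

Lemma isFreeP F j : isFree l m m' F -> j \in F -> F = free_block l m m' j.
Proof.
case/andP=> F_cond /forallP F_max jF.
have := F_max (free_block l m m' j).
by rewrite freeCond_free_block free_block_max //= => /eqP.
Qed.

Lemma pick_free_block j :
  [pick F | isFree l m m' F && (j \in F)] =
  if m j * m' j < 0 then Some (free_block l m m' j) else None.
Proof.
case: pickP => [F /andP[F_free jF] | no_F].
  have eF := isFreeP F_free jF.
  by move: jF; rewrite eF inE eqxx => /= ->.
case: ifP => // free_j.
by move: (no_F (free_block l m m' j)); rewrite isFree_free_block // inE eqxx free_j.
Qed.

Lemma mustar'E j : mustar' l m m' j =
  if m j * m' j < 0 then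
    if (#|[set i in free_block l m m' j | (i < j)%N]|
        < #|[set i in free_block l m m' j | m' i == half]|)%N
    then half else - half
  else m' j.
Proof. by rewrite ffunE pick_free_block; case: ifP. Qed.

Lemma mustarE j :
  mustar l m m' j = if m j * m' j < 0 then - mustar' l m m' j else m j.
Proof. by rewrite ffunE pick_free_block; case: ifP. Qed.

Lemma mudiam'E j : mudiam' l m m' j =
  if (val j == (n - 1)%N) || (val j == (n - a_num l m m' - 1)%N)
  then half else mustar' l m m' j.
Proof. by rewrite ffunE. Qed.

Lemma mudiamE j : mudiam l m m' j =
  if (val j == (n - 1)%N) || (val j == (n - a_num l m m' - 1)%N)
  then - half else mustar l m m' j.
Proof. by rewrite ffunE. Qed.

Hypotheses (PSm : inPS m) (PSm' : inPS m').

Lemma inPS_mustar' : inPS (mustar' l m m').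
Proof. by move=> j; rewrite mustar'E; case: ifP => _; [case: ifP; [left|right] | ]. Qed.

Lemma inPS_mustar : inPS (mustar l m m').
Proof.
move=> j; rewrite mustarE; case: ifP => // _.
by case: (inPS_mustar' j) => ->; [right | left; rewrite opprK].
Qed.

Lemma inPS_mudiam' : inPS (mudiam' l m m').
Proof. by move=> j; rewrite mudiam'E; case: ifP => _; [left | apply: inPS_mustar']. Qed.

Lemma inPS_mudiam : inPS (mudiam l m m').
Proof. by move=> j; rewrite mudiamE; case: ifP => _; [right | apply: inPS_mustar]. Qed.

Lemma mustar'_add_mustar j : mustar' l m m' j + mustar l m m' j = m j + m' j.
Proof.
rewrite mustarE; case: ifPn => [free_j | nonfree_j]; last first.
  by rewrite mustar'E (negbTE nonfree_j) addrC.
by rewrite subrr (pm_half_free (PSm j) (PSm' j) free_j) addNr.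
Qed.

End FreeBlocks.

Section LevelSets.
Variables (n : nat) (l m m' : weight n).
Hypotheses (PSm : inPS m) (PSm' : inPS m').
Hypotheses (dom_lm : dominant (l + m)) (dom_lmm' : dominant (l + m + m')).

Lemma level_mono_m (i j : 'I_n) : (i <= j)%N -> l i = l j -> m j <= m i.
Proof.
case: dom_lm => _ _ lm_mono _ le_ij eq_l.
by have := lm_mono i j le_ij; rewrite !weightD eq_l lerD2l.
Qed.

Lemma level_mono_m' (i j : 'I_n) : (i <= j)%N -> l i = l j -> m i = m j -> m' j <= m' i.
Proof.
case: dom_lmm' => _ _ lmm_mono _ le_ij eq_l eq_m.
by have := lmm_mono i j le_ij; rewrite !weightD eq_l eq_m lerD2l.
Qed.

Lemma nonfree_before_free (i j : 'I_n) : (i <= j)%N -> l i = l j ->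
  ~~ (m i * m' i < 0) -> m j * m' j < 0 -> m i = half /\ m' i = half.
Proof.
move=> le_ij eq_l nonfree_i free_j.
have em_i := pm_half_nonfree (PSm i) (PSm' i) nonfree_i.
have em_j := pm_half_free (PSm j) (PSm' j) free_j.
have le_m := level_mono_m le_ij eq_l.
have le_m' := level_mono_m' le_ij eq_l.
have h := half_gt0.
suff mi : m i = half by rewrite -em_i mi.
case: (PSm i) => // mi; exfalso.
have mj : m j = - half by case: (PSm j) le_m => ->; rewrite mi; lra.
have := le_m' (etrans mi (esym mj)).
rewrite -em_i mi; move: em_j; rewrite mj.
by case: (PSm' j) => ->; lra.
Qed.

Lemma nonfree_after_free (i j : 'I_n) : (i <= j)%N -> l i = l j ->
  m i * m' i < 0 -> ~~ (m j * m' j < 0) -> m' j = - half.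
Proof.
move=> le_ij eq_l free_i nonfree_j.
have em_i := pm_half_free (PSm i) (PSm' i) free_i.
have em_j := pm_half_nonfree (PSm j) (PSm' j) nonfree_j.
have le_m := level_mono_m le_ij eq_l.
have le_m' := level_mono_m' le_ij eq_l.
have h := half_gt0.
rewrite -em_j; case: (PSm j) => // mj; exfalso.
have mi : m i = half by case: (PSm i) le_m => ->; rewrite mj; lra.
have := le_m' (etrans mi (esym mj)).
rewrite -em_j mj; move: em_i; rewrite mi.
by case: (PSm' i) => ->; lra.
Qed.

Lemma mustar'_level_mono (i j : 'I_n) : (i <= j)%N -> l i = l j ->
  mustar' l m m' j <= mustar' l m m' i.
Proof.
move=> le_ij eq_l; have h := half_gt0.
have same_block : free_block l m m' j = free_block l m m' i.
  by apply/setP => k; rewrite !inE eq_l.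
rewrite !mustar'E same_block.
case: (boolP (m j * m' j < 0)) => free_j; case: (boolP (m i * m' i < 0)) => free_i.
- case: ifPn => below_j; case: ifPn => below_i; try lra.
  move: below_i; rewrite (leq_ltn_trans _ below_j) // subset_leq_card //.
  by apply/subsetP => k; rewrite !inE => /andP[-> /leq_trans]; apply.
- have [_ ->] := nonfree_before_free le_ij eq_l free_i free_j.
  by case: ifP => _; lra.
- rewrite (nonfree_after_free le_ij eq_l free_i free_j).
  by case: ifP => _; lra.
- rewrite -(pm_half_nonfree (PSm i) (PSm' i) free_i).
  by rewrite -(pm_half_nonfree (PSm j) (PSm' j) free_j) level_mono_m.
Qed.

Hypothesis dom_l : dominant l.

Lemma free_between (i k j : 'I_n) : (i <= k)%N -> (k <= j)%N -> l i = l j ->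
  m i * m' i < 0 -> m j * m' j < 0 -> l k = l i /\ m k * m' k < 0.
Proof.
case: dom_l => _ _ l_mono _ le_ik le_kj eq_l free_i free_j.
have eq_lk : l k = l i.
  by apply/le_anti; rewrite l_mono // eq_l l_mono.
split=> //; apply/negPn/negP => nonfree_k.
have [_ m'k_half] := nonfree_before_free le_kj (etrans eq_lk eq_l) nonfree_k free_j.
have := nonfree_after_free le_ik (esym eq_lk) free_i nonfree_k.
by rewrite m'k_half => /eqP; rewrite (negbTE half_neq_opp).
Qed.

End LevelSets.

Lemma type1_free_ends n (l m m' : weight n) : dominant l -> type1 l m m' ->
  exists i1 i2 : 'I_n, [/\ i1 = (n - 2)%N :> nat, i2 = (n - 1)%N :> nat,
    m i1 * m' i1 < 0, m i2 * m' i2 < 0 & l i2 < l i1].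
Proof.
case=> _ _ l_mono _ [_ [F [G [i1 [i2 [[v1 v2 F_free G_free] [i1F i2G neFG]]]]]]].
have eF := isFreeP F_free i1F; have eG := isFreeP G_free i2G.
exists i1, i2; split => //.
- by move: i1F; rewrite eF inE => /andP[].
- by move: i2G; rewrite eG inE => /andP[].
rewrite lt_neqAle l_mono ?v1 ?v2 ?leq_sub2l // andbT.
apply: contraNneq neFG => eq_l; rewrite eF eG.
by apply/eqP/setP => k; rewrite !inE eq_l.
Qed.

Section TypeOne.
Variables (n : nat) (l m m' : weight n).
Hypotheses (dom_l : dominant l) (PSm : inPS m) (PSm' : inPS m').
Hypotheses (dom_lm : dominant (l + m)) (dom_lmm' : dominant (l + m + m')).
Variables (i1 i2 : 'I_n).
Hypotheses (val_i1 : i1 = (n - 2)%N :> nat) (val_i2 : i2 = (n - 1)%N :> nat).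
Hypotheses (free_i1 : m i1 * m' i1 < 0) (free_i2 : m i2 * m' i2 < 0).
Hypothesis l_i2_lt_i1 : l i2 < l i1.

Local Notation S := (free_block l m m' i1).
Local Notation a := (a_num l m m').

Lemma leq_i1 (k : 'I_n) : (k < n - 1)%N -> (k <= i1)%N.
Proof. by rewrite val_i1; lia. Qed.

Lemma mem_i1_free_block : i1 \in S.
Proof. by rewrite inE eqxx free_i1. Qed.

Lemma free_block_i1_lt k : k \in S -> (k < n - 1)%N.
Proof.
rewrite inE => /andP[/eqP l_k _].
have : (k : nat) != i2.
  by apply: contraTneq l_i2_lt_i1 => /val_inj eq_k; rewrite -eq_k l_k ltxx.
by have := ltn_ord k; rewrite val_i2; lia.
Qed.

Lemma card_free_block_i1 : (#|S| <= n - 1)%N.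
Proof.
rewrite -[X in (_ <= X)%N]subn0 -(@card_ord_range n 0) ?leq_subr //.
by apply: subset_leq_card; apply/subsetP => k /free_block_i1_lt.
Qed.

Lemma mem_free_block_i1 k : (k \in S) = (n - 1 - #|S| <= k < n - 1)%N.
Proof.
have [t tS t_min] := arg_minnP (fun k : 'I_n => val k) mem_i1_free_block.
have S_range j : (j \in S) = (t <= j < n - 1)%N.
  apply/idP/andP => [jS | [le_tj lt_j]]; first by rewrite t_min ?free_block_i1_lt.
  have : t \in S := tS; rewrite inE => /andP[/eqP l_t free_t].
  have [l_j free_j] :=
    free_between PSm PSm' dom_lm dom_lmm' dom_l le_tj (leq_i1 lt_j) l_t free_t free_i1.
  by rewrite inE l_j l_t eqxx free_j.
have card_S : #|S| = (n - 1 - t)%N.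
  by rewrite (eq_card (B := [pred j : 'I_n | (t <= j < n - 1)%N]) S_range)
    card_ord_range // leq_subr.
by rewrite S_range card_S subKn // ltnW // free_block_i1_lt.
Qed.

Lemma a_numE : a = #|[set j in S | m' j == - half]|.
Proof.
rewrite /a_num; case: pickP => [F /andP[F_free /existsP[i /andP[iF /eqP v_i]]] | no_F].
  have e_i : i = i1 by apply: val_inj; rewrite /= v_i val_i1.
  by rewrite e_i in iF; rewrite (isFreeP F_free iF).
have : [exists i in S, val i == (n - 2)%N].
  by apply/existsP; exists i1; rewrite mem_i1_free_block /= val_i1 eqxx.
by move: (no_F S); rewrite isFree_free_block // => /= ->.
Qed.

Lemma a_num_le : (a <= #|S|)%N.
Proof.
by rewrite a_numE subset_leq_card //; apply/subsetP => j; rewrite inE => /andP[].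
Qed.

Lemma card_free_block_i1_half : #|[set j in S | m' j == half]| = (#|S| - a)%N.
Proof.
have split_half j : (m' j == - half) = ~~ (m' j == half).
  by case: (PSm' j) => ->; rewrite eqxx ?(negbTE half_neq_opp) // eq_sym half_neq_opp.
rewrite a_numE.
have -> : [set j in S | m' j == half] = S :&: [set j | m' j == half].
  by apply/setP => j; rewrite !inE.
have -> : [set j in S | m' j == - half] = S :\: [set j | m' j == half].
  by apply/setP => j; rewrite !inE split_half andbC.
by rewrite -(cardsID [set j | m' j == half] S) addnK.
Qed.

Lemma mustar'_in_free_block (j : 'I_n) : j \in S ->
  mustar' l m m' j = if (j < n - 1 - a)%N then half else - half.
Proof.
move=> jS; have := jS; rewrite inE => /andP[/eqP l_j free_j].
rewrite mustar'E free_j.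
have -> : free_block l m m' j = S by apply/setP => k; rewrite !inE l_j.
rewrite card_free_block_i1_half.
move: jS; rewrite mem_free_block_i1 => /andP[ge_j lt_j].
have -> : #|[set k in S | (k < j)%N]| = (j - (n - 1 - #|S|))%N.
  rewrite -(@card_ord_range n) 1?ltnW //; apply: eq_card => k.
  by rewrite inE mem_free_block_i1 inE; lia.
suff -> : (j - (n - 1 - #|S|) < #|S| - a)%N = (j < n - 1 - a)%N by [].
by have := a_num_le; have := card_free_block_i1; lia.
Qed.

Lemma mustar'_before_diamond (i : 'I_n) : (i < n - 1 - a)%N -> l i = l i1 ->
  mustar' l m m' i = half.
Proof.
move=> lt_i l_i; case: (boolP (m i * m' i < 0)) => [free_i | nonfree_i].
  by rewrite mustar'_in_free_block ?lt_i // inE l_i eqxx.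
have le_i : (i <= i1)%N by apply: leq_i1; lia.
have [_ m'_i] := nonfree_before_free PSm PSm' dom_lm dom_lmm' le_i l_i nonfree_i free_i1.
by rewrite mustar'E (negbTE nonfree_i).
Qed.

Lemma diamond_cases (j : 'I_n) : (val j == (n - 1)%N) || (val j == (n - a - 1)%N) ->
  j = i2 \/ j \in S /\ j = (n - 1 - a)%N :> nat.
Proof.
have last_i2 (k : 'I_n) : k = (n - 1)%N :> nat -> k = i2.
  by move=> v_k; apply: val_inj; rewrite /= v_k val_i2.
case/orP => /eqP /= v_j; first by left; apply: last_i2.
have [a0 | a_gt0] := posnP a; first by left; apply: last_i2; rewrite v_j a0 subn0.
right; split; last by lia.
by rewrite mem_free_block_i1 v_j; have := a_num_le; have := card_free_block_i1; lia.
Qed.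

Lemma mudiam'_level_mono (i j : 'I_n) : (i <= j)%N -> l i = l j ->
  mudiam' l m m' j <= mudiam' l m m' i.
Proof.
move=> le_ij l_ij; have h := half_gt0.
rewrite !mudiam'E; case: ifPn => [diam_j | _]; case: ifPn => [_ | not_diam_i].
- exact: lexx.
- move: not_diam_i => /= not_diam_i.
  case: (diamond_cases diam_j) => [e_j | [jS v_j]].
    have [_ _ l_mono _] := dom_l.
    have lt_i : (i < n - 1)%N by have := ltn_ord i; lia.
    by move: (l_mono _ _ (leq_i1 lt_i)); rewrite l_ij e_j leNgt l_i2_lt_i1.
  have lt_i : (i < n - 1 - a)%N by lia.
  rewrite mustar'_before_diamond //.
  by move: jS; rewrite inE -l_ij => /andP[/eqP].
- by case: (inPS_mustar' l m PSm' j) => ->; lra.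
- exact: mustar'_level_mono.
Qed.

Lemma mudiam'_add_mudiam : mudiam' l m m' + mudiam l m m' = m + m'.
Proof.
apply/ffunP => j; rewrite !weightD mudiam'E mudiamE.
case: ifPn => [diam_j | _]; last exact: mustar'_add_mustar.
have free_j : m j * m' j < 0.
  by case: (diamond_cases diam_j) => [-> // | [+ _]]; rewrite inE => /andP[].
by rewrite subrr (pm_half_free (PSm j) (PSm' j) free_j) addNr.
Qed.

Lemma dominant_add_mudiam' : dominant (l + mudiam' l m m').
Proof.
apply: dominant_add_PS => //; first exact: inPS_mudiam'.
  exact: mudiam'_level_mono.
have [_ _ _ l_last] := dom_l; have h := half_gt0.
have diam_last : cw (mudiam' l m m') (n - 1) = half.
  by rewrite -val_i2 cw_ord mudiam'E /= val_i2 eqxx.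
have diam_ge : - half <= cw (mudiam' l m m') (n - 2).
  by rewrite -val_i1 cw_ord; case: (inPS_mudiam' l m PSm' i1) => ->; lra.
rewrite !cwD; lra.
Qed.

End TypeOne.

Theorem proposition6p5 (n : nat) (l m m' : weight n) :
  (2 <= n)%N ->
  admissible l m m' ->
  type1 l m m' ->
  dominant (l + mudiam' l m m') /\
  admissible l (mudiam' l m m') (mudiam l m m').
Proof.
(* [2 <= n] also follows from [type1], whose two free intervals are distinct. *)
move=> _ [[k l_Delta] PSm PSm' dom_lm dom_lmm'] l_type1.
have dom_l := inDelta_dominant l_Delta.
have [i1 [i2 [val_i1 val_i2 free_i1 free_i2 l_i2_lt_i1]]] := type1_free_ends dom_l l_type1.
have dom_diam := dominant_add_mudiam' dom_l PSm PSm' dom_lm dom_lmm'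
  val_i1 val_i2 free_i1 free_i2 l_i2_lt_i1.
have sum_diam := mudiam'_add_mudiam dom_l PSm PSm' dom_lm dom_lmm'
  val_i1 val_i2 free_i1 free_i2 l_i2_lt_i1.
split=> //; split=> //; first by exists k.
- exact: inPS_mudiam'.
- exact: inPS_mudiam.
by rewrite -addrA sum_diam addrA.
Qed.
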